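(* For integers $I\ge 0$ and $S\ge 1$ let $P(I,S)$ be the probability, in the Bluetooth pairing process described in the context, that a fixed clean device $w_t$ ends up paired with an infected device. Then $P(0,S)=0$ and $P(1,S)=\frac{1}{S}$ for every $S\ge 1$, and for all integers $I\ge 2$, $S\ge 1$, $$P(I,S)=\frac{1}{I+S-1}+\frac{S-1}{I+S-1}\,P(I-1,S-1)+\frac{I-1}{I+S-1}\,P(I-2,S),$$ with the convention $P(I',0)=0$ for every $I'\ge 0$ (the term $P(I-1,S-1)$ appears only with coefficient $0$ when $S=1$).
   Context: Pairing process: let $I,S\ge 0$ be integers. There are $I$ infected devices $b_1,\dots,b_I$ and $S$ clean devices $w_1,\dots,w_S$. For $t=1,2,\dots,I$ in this order: if $b_t$ is not yet paired and at least one device other than $b_t$ (infected or clean) is not yet paired, then $b_t$ chooses one of the currently unpaired devices other than itself uniformly at random, independently of all previous choices, and becomes paired with it; otherwise $b_t$ does nothing. Each device belongs to at most one pair, and pairs are never broken. A clean device that ends up paired with an infected device becomes infected; clean devices never initiate pairings. The probability $P(I,S)$ does not depend on which clean device $w_t$ is fixed. *)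

From mathcomp Require Import all_boot all_order all_algebra.
Set Implicit Arguments. Unset Strict Implicit. Unset Printing Implicit Defensive.
Import Order.TTheory GRing.Theory Num.Theory.
Local Open Scope ring_scope.

(* Devices: infected b_t = inl t (t : 'I_I), clean w_j = inr j (j : 'I_S). *)
Definition dev (I S : nat) : finType := ('I_I + 'I_S)%type.

(* A (partial) pairing: p x = Some y means x is paired with y; None = unpaired. *)
Definition pairing (I S : nat) := {ffun dev I S -> option (dev I S)}.

Definition empty_pairing (I S : nat) : pairing I S := [ffun _ => None].

Definition pair_up (I S : nat) (p : pairing I S) (b c : dev I S) : pairing I S :=
  [ffun x => if x == b then Some c else if x == c then Some b else p x].

(* Expected value of the payoff f on the final pairing, when the infected
   devices b_t for t in ts act in order, starting from pairing p.
   If b_t is unpaired and the list C of unpaired devices other than b_t is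
   nonempty, b_t picks c uniformly in C; otherwise b_t does nothing. *)
Fixpoint run (I S : nat) (ts : seq 'I_I) (f : pairing I S -> rat)
    (p : pairing I S) : rat :=
  match ts with
  | [::] => f p
  | t :: ts' =>
      let b : dev I S := inl t in
      let C := [seq x <- enum (dev I S) | (x != b) && (p x == None)] in
      if (p b == None) && (0 < size C)%N then
        (\sum_(c <- C) run ts' f (pair_up p b c)) / (size C)%:R
      else run ts' f p
  end.

Definition w_infected (I S : nat) (j : 'I_S) (p : pairing I S) : rat :=
  match p (inr j) with
  | Some (inl _) => 1
  | _ => 0
  end.

Definition Pw (I S : nat) (j : 'I_S) : rat :=
  run (enum 'I_I) (@w_infected I S j) (empty_pairing I S).

(* P(I,S): the (j-independent) probability, read at w_0; convention P(I,0)=0. *)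
Definition P (I S : nat) : rat :=
  match S with
  | 0 => 0
  | S'.+1 => Pw I (@ord0 S')
  end.

(* As long as w_j is unpaired, every
   unpaired infected device is still to act, so the future only depends on
   the number a of unpaired infected devices and the number s of unpaired
   clean devices other than w_j.  When the next unpaired infected device acts
   it picks, uniformly among its a + s other unpaired devices, w_j itself
   (and w_j stays infected), one of the s other clean devices, or one of the
   a - 1 other infected devices.  This is the recursion of the theorem, and
   the initial state has a = I, s = S - 1. *)

From mathcomp Require Import all_boot all_order all_algebra.
From mathcomp Require Import ring zify.
Import GRing.Theory Num.Theory.
Set Implicit Arguments. Unset Strict Implicit. Unset Printing Implicit Defensive.
Local Open Scope ring_scope.

(* [infection_prob a s] is P(a, s + 1); the inner match keeps the recursion
   on [a - 2] structural. *)
Fixpoint infection_prob (a s : nat) : rat :=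
  match a with
  | 0 => 0
  | a'.+1 =>
      (1 + s%:R * infection_prob a' s.-1
         + a'%:R * (if a' is a''.+1 then infection_prob a'' s else 0))
      / (1 + s + a')%:R
  end.

Lemma infection_probS a s :
  infection_prob a.+1 s =
  (1 + s%:R * infection_prob a s.-1 + a%:R * infection_prob a.-1 s) / (1 + s + a)%:R.
Proof. by case: a. Qed.

Section Pairing.
Variables I S : nat.
Implicit Types (p : pairing I S) (b c x : dev I S) (t : 'I_I) (ts : seq 'I_I) (j : 'I_S).

Definition free_others p b : pred (dev I S) := [pred c | (c != b) && (p c == None)].

Definition infected x : bool := if x is inl _ then true else false.

Definition clean_other j x : bool := if x is inr k then k != j else false.

Definition nfree (Q : pred (dev I S)) p : nat := #|[pred x | Q x && (p x == None)]|.

Lemma pair_up_None p b c x :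
  (pair_up p b c x == None) = [&& x != b, x != c & p x == None].
Proof. by rewrite ffunE; case: (x == b); case: (x == c). Qed.

Lemma nfree_pair_up (Q : pred (dev I S)) p b c :
  b != c -> p b = None -> p c = None ->
  nfree Q (pair_up p b c) = (nfree Q p - Q b - Q c)%N.
Proof.
move=> bc pb pc; rewrite [nfree Q p]/nfree (cardD1 b) (cardD1 c) !inE pb pc.
rewrite !eqxx !andbT eq_sym bc /= !addKn.
apply: eq_card => x; rewrite !inE pair_up_None.
by case: (x == b); case: (x == c); case: (Q x).
Qed.

Lemma sum_nfree (Q : pred (dev I S)) p (y : rat) :
  \sum_(c | Q c && (p c == None)) y = y *+ nfree Q p.
Proof. by rewrite -sumr_const; apply: eq_bigl. Qed.

Lemma run_cons t ts (f : pairing I S -> rat) p :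
  let b := inl t in let n := #|free_others p b| in
  run (t :: ts) f p =
  if (p b == None) && (0 < n)%N then
    (\sum_(c in free_others p b) run ts f (pair_up p b c)) / n%:R
  else run ts f p.
Proof.
have filterE (P : pred (dev I S)) : [seq c <- enum (dev I S) | P c] = enum P.
  by rewrite enumT /enum_mem unlock.
by rewrite /= filterE -cardE big_enum.
Qed.

Lemma run_w_paired j ts p :
  p (inr j) != None -> run ts (w_infected j) p = w_infected j p.
Proof.
elim: ts p => [|t ts IH] p pj //; rewrite run_cons.
case: ifP => [/andP [_ n_gt0]|_]; last exact: IH.
rewrite (eq_bigr (fun=> w_infected j p)) => [|c /andP [_ pc]].
  by rewrite sumr_const -[_ *+ _]mulr_natr mulfK // pnatr_eq0 -lt0n.
have keep_j : pair_up p (inl t) c (inr j) = p (inr j).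
  rewrite ffunE /=.
  by case: ifP => // /eqP jc; rewrite jc pc in pj.
by rewrite IH /w_infected keep_j.
Qed.

Lemma sum_free_others j t p (F : dev I S -> rat) :
  p (inr j) = None ->
  \sum_(c in free_others p (inl t)) F c =
  F (inr j) + \sum_(c | clean_other j c && (p c == None)) F c
  + \sum_(c | [pred c | infected c && (c != inl t)] c && (p c == None)) F c.
Proof.
move=> pj; rewrite (bigD1 (inr j)) /=; last by rewrite !inE pj eqxx.
rewrite -addrA (bigID infected) /= [X in _ + X = _]addrC.
congr (_ + (_ + _)); apply: eq_bigl => -[u|k]; rewrite !inE /= ?andbT ?andbF //.
by rewrite (inj_eq inr_inj) andbC.
Qed.

Lemma nfree_infected_other t p :
  p (inl t) = None ->
  nfree infected p = (nfree [pred c | infected c && (c != inl t)] p).+1.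
Proof.
move=> pt; rewrite /nfree (cardD1 (inl t)) !inE pt eqxx add1n; congr _.+1.
by apply: eq_card => c; rewrite !inE andbA (andbC (c != _)).
Qed.

Lemma run_infection_prob j ts p :
  p (inr j) = None -> (forall u, p (inl u) = None -> u \in ts) ->
  run ts (w_infected j) p =
  infection_prob (nfree infected p) (nfree (clean_other j) p).
Proof.
elim: ts p => [|t ts IH] p pj free_in_ts.
  have -> : nfree infected p = 0%N.
    by apply: eq_card0 => -[u|k] //=; rewrite !inE /=; apply/eqP => /free_in_ts.
  by rewrite /= /w_infected pj.
rewrite run_cons; case: (eqVneq (p (inl t)) None) => pt /=; last first.
  apply: IH => // u pu; move: (free_in_ts u pu); rewrite inE => /predU1P [ut|//].
  by rewrite -ut pu in pt.
have -> : (0 < #|free_others p (inl t)|)%N.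
  by apply/card_gt0P; exists (inr j); rewrite !inE pj eqxx.
rewrite (nfree_infected_other pt) infection_probS /=.
set s := nfree (clean_other j) p.
set a := nfree [pred c | infected c && (c != inl t)] p.
have run_after c : c \in free_others p (inl t) -> c != inr j ->
    run ts (w_infected j) (pair_up p (inl t) c) =
    infection_prob (a - infected c) (s - clean_other j c).
  rewrite !inE => /andP [ct /eqP pc] cj; rewrite eq_sym in ct.
  rewrite IH; last 2 first.
  - by apply/eqP; rewrite pair_up_None pj eqxx andbT /= eq_sym.
  - move=> u /eqP; rewrite pair_up_None => /and3P [ut _ /eqP /free_in_ts].
    by move: ut; rewrite inE (inj_eq inl_inj) => /negbTE ->.
  by rewrite !nfree_pair_up // (nfree_infected_other pt) subSS !subn0.
have card_free : #|free_others p (inl t)|%:R = (1 + s + a)%:R :> rat.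
  by rewrite -sumr_const (sum_free_others _ _ pj) !sum_nfree !natrD.
rewrite card_free (sum_free_others _ _ pj) run_w_paired; last first.
  by rewrite ffunE /= eqxx.
rewrite /w_infected ffunE /= eqxx.
have -> : \sum_(c | clean_other j c && (p c == None))
    run ts (w_infected j) (pair_up p (inl t) c) = s%:R * infection_prob a s.-1.
  rewrite mulr_natl -sum_nfree; apply: eq_bigr => -[u|k] //= /andP [kj pk].
  by rewrite run_after ?inE ?pk //= kj subn0 subn1.
have -> : \sum_(c | [pred c | infected c && (c != inl t)] c && (p c == None))
    run ts (w_infected j) (pair_up p (inl t) c) = a%:R * infection_prob a.-1 s.
  rewrite mulr_natl -sum_nfree; apply: eq_bigr => -[u|k] /andP [/= ut pu] //.
  by rewrite run_after ?inE ?ut ?pu //= subn0 subn1.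
by [].
Qed.

Lemma card_infected : #|[pred x | infected x]| = I.
Proof.
rewrite -[RHS]card_ord -(card_imset _ (@inl_inj 'I_I 'I_S)).
apply: eq_card => -[u|k]; rewrite !inE /=; first by rewrite imset_f.
by apply/esym/imsetP => -[].
Qed.

Lemma card_clean_other j : #|[pred x | clean_other j x]| = S.-1.
Proof.
rewrite -[S in RHS]card_ord -(cardC1 j) -(card_imset _ (@inr_inj 'I_I 'I_S)).
apply: eq_card => -[u|k]; rewrite !inE /=; first by apply/esym/imsetP => -[].
by apply/idP/imsetP => [kj|[k' kj [->]]]; [exists k | rewrite inE in kj].
Qed.

Lemma nfree_empty (Q : pred (dev I S)) :
  nfree Q (empty_pairing I S) = #|[pred x | Q x]|.
Proof. by apply: eq_card => x; rewrite !inE ffunE andbT. Qed.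

Lemma Pw_infection_prob j : Pw I j = infection_prob I S.-1.
Proof.
rewrite /Pw run_infection_prob; last 2 first.
- by rewrite ffunE.
- by move=> u _; rewrite mem_enum.
by rewrite !nfree_empty card_infected card_clean_other.
Qed.
End Pairing.

Theorem mainTheorem1 :
  (forall (S : nat) (j : 'I_S), Pw 0 j = 0) /\
  (forall (S : nat) (j : 'I_S), Pw 1 j = 1 / S%:R) /\
  (forall (I S : nat) (j : 'I_S), (2 <= I)%N ->
     Pw I j = 1 / (I + S - 1)%:R
              + (S - 1)%:R / (I + S - 1)%:R * P (I - 1) (S - 1)
              + (I - 1)%:R / (I + S - 1)%:R * P (I - 2) S).
Proof.
split; first by move=> S j; rewrite Pw_infection_prob.
split.
  move=> [[]//|S] j; rewrite Pw_infection_prob infection_probS /=.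
  by rewrite mulr0 mul0r !addr0 addn0 add1n.
move=> [|[|I]] // [[]//|S] j _.
rewrite Pw_infection_prob infection_probS.
rewrite (_ : I.+2 + S.+1 - 1 = 1 + S.+1.-1 + I.+1)%N; last by lia.
rewrite !subSS !subn0.
by case: S j => [|S] j; rewrite /P ?Pw_infection_prob !succnK; ring.
Qed.
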